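(* Let $G$ be a large scale group whose large scale structure is induced by a Cayley metric $d$. Then $\mathrm{Ends}(G)$ is non-metrizable if and only if one of the following holds: (1) there is a bounded subset $B$ of $G$ such that the union of the bounded $1$-components of $G\setminus B$ is unbounded; (2) there is a bounded subset $B$ of $G$ such that $G\setminus B$ has infinitely many unbounded $1$-components.
   Context: A large scale group is a group $G$ with a bornology $\mathcal B$ (a cover of $G$ closed under subsets and finite unions) closed under inverses and products; uniformly bounded covers are those refining $\{gB\}_{g\in G}$ for some $B\in\mathcal B$, and bounded sets are members of $\mathcal B$. A Cayley graph of $G$ is a connected graph $\Gamma$ with vertex set $G$ whose graph metric is left-invariant and such that the inclusion $G\to\Gamma$ is a coarse equivalence; the restriction $d$ of its graph metric to $G$ is a Cayley metric (so $d$-bounded sets are exactly the bounded sets of $G$). The $1$-components of $A\subseteq G$ are the equivalence classes of $A$ under the relation ''joined by a finite sequence in $A$ whose consecutive terms are at $d$-distance at most 1''. For a uniformly bounded cover $\mathcal U$ and $A\subseteq G$, $st(A,\mathcal U)$ is the union of members of $\mathcal U$ meeting $A$. $A$ is coarsely clopen if $st(A,\mathcal U)\cap st(G\setminus A,\mathcal U)$ is bounded for every uniformly bounded $\mathcal U$. An end of $G$ is a family of unbounded coarsely clopen sets maximal with respect to all finite intersections being unbounded. $\mathrm{Ends}(G)$ is topologized by the basis consisting of the sets $U_{end}=\{E\in\mathrm{Ends}(G):U\in E\}$, $U$ ranging over coarsely clopen subsets of $G$. *)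

From Stdlib Require Import Reals List Arith.
Set Implicit Arguments.

Section Defs.
Variable G : Type.

Record group_laws (mul : G -> G -> G) (inv : G -> G) (e : G) : Prop := {
  mulA : forall x y z, mul x (mul y z) = mul (mul x y) z;
  mul1g : forall x, mul e x = x;
  mulVg : forall x, mul (inv x) x = e }.

Variable E : G -> G -> Prop.  (* adjacency relation of the Cayley graph *)

Inductive walk : nat -> G -> G -> Prop :=
| walk0 : forall x, walk 0 x x
| walkS : forall n x y z, E x y -> walk n y z -> walk (S n) x z.

(* graph metric: d(x,y) <= n *)
Definition dle (x y : G) (n : nat) : Prop := exists m, m <= n /\ walk m x y.

Definition connected_graph : Prop := forall x y, exists n, walk n x y.

(* d-ls_bounded sets = ls_bounded sets of the induced large scale structure *)
Definition ls_bounded (B : G -> Prop) : Prop :=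
  exists x0 n, forall b, B b -> dle x0 b n.

(* uniformly ls_bounded covers: covers of G refining {g B}_g for some ls_bounded B *)
Definition unif_bounded_cover (mul : G -> G -> G) (U : (G -> Prop) -> Prop) : Prop :=
  (forall x, exists V, U V /\ V x) /\
  exists B, ls_bounded B /\
    forall V, U V -> exists g, forall x, V x -> exists b, B b /\ x = mul g b.

Definition star (A : G -> Prop) (U : (G -> Prop) -> Prop) : G -> Prop :=
  fun x => exists V, U V /\ V x /\ exists a, V a /\ A a.

Definition coarsely_clopen (mul : G -> G -> G) (A : G -> Prop) : Prop :=
  forall U, unif_bounded_cover mul U ->
    ls_bounded (fun x => star A U x /\ star (fun y => ~ A y) U x).

(* intersection of a finite list of subsets (empty list gives G) *)
Definition list_inter (l : list (G -> Prop)) : G -> Prop :=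
  fun x => forall A, In A l -> A x.

Definition admissible_family (mul : G -> G -> G) (F : (G -> Prop) -> Prop) : Prop :=
  (forall A, F A -> coarsely_clopen mul A /\ ~ ls_bounded A) /\
  (forall l, (forall A, In A l -> F A) -> ~ ls_bounded (list_inter l)).

Definition is_end (mul : G -> G -> G) (F : (G -> Prop) -> Prop) : Prop :=
  admissible_family mul F /\
  forall F', admissible_family mul F' -> (forall A, F A -> F' A) ->
    forall A, F' A -> F A.

Definition Ends (mul : G -> G -> G) : Type := { F : (G -> Prop) -> Prop | is_end mul F }.

(* topology on Ends generated by the basis U_end = {e | U in e}, U coarsely clopen *)
Definition ends_open (mul : G -> G -> G) (O : Ends mul -> Prop) : Prop :=
  forall p, O p -> exists U, coarsely_clopen mul U /\ proj1_sig p U /\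
    forall q, proj1_sig q U -> O q.

Definition metrizable_ends (mul : G -> G -> G) : Prop :=
  exists m : Ends mul -> Ends mul -> R,
    (forall p q, m p q = 0%R <-> p = q) /\
    (forall p q, m p q = m q p) /\
    (forall p q r, (m p r <= m p q + m q r)%R) /\
    (forall O, ends_open O <->
       (forall p, O p -> exists eps, (0 < eps)%R /\ forall q, (m p q < eps)%R -> O q)).

(* 1-components: chains inside A with consecutive terms at d-distance <= 1 *)
Inductive chain1 (A : G -> Prop) (x : G) : G -> Prop :=
| chain1_refl : A x -> chain1 A x x
| chain1_step : forall y z, chain1 A x y -> A z -> dle y z 1 -> chain1 A x z.

Definition comp1 (A : G -> Prop) (x : G) : G -> Prop := fun y => chain1 A x y.

Definition is_comp1 (A : G -> Prop) (C : G -> Prop) : Prop :=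
  exists x, A x /\ C = comp1 A x.

Definition union_bounded_comps (A : G -> Prop) : G -> Prop :=
  fun y => exists C, is_comp1 A C /\ ls_bounded C /\ C y.

Definition finite_family (P : (G -> Prop) -> Prop) : Prop :=
  exists l : list (G -> Prop), forall C, P C -> In C l.

End Defs.

(* Write d for the graph metric, ball n for the d-ball of radius n about e, and
   call a set "B-closed" when it avoids B and is closed under 1-steps outside B
   (i.e. it is a union of 1-components of G \ B).
   1. A set is coarsely clopen iff its edge boundary is bounded; hence every
      B-closed set is coarsely clopen when B is bounded.
   2. Ends behave like ultrafilters on coarsely clopen sets modulo bounded sets:
      they are upward closed, prime, contain every coarsely clopen set or its
      complement, and every family of coarsely clopen sets whose finite
      intersections are unbounded extends to an end (Zorn).  Consequently the
      basic open sets U_end are compact.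
   3. If conditions (1) and (2) fail for every ball, every end selects exactly one
      unbounded 1-component of G \ ball n for each n, and sep_dist p q = 1/(n+1),
      n the first level where the selected components differ, is a metric
      inducing the topology of Ends(G) (lemma metrizable).
   4. If (1) or (2) holds for some bounded B, there is a "comb": pairwise disjoint
      1-components K_k of G \ B such that every block D_i = U_j K_<i,j> is
      unbounded.  Each f : nat -> bool yields a clopen set W_f = U_{f i} D_i of
      ends, distinct f giving distinct sets.  In a compact metric space every
      clopen set is a finite union of balls from a countable family, so there are
      only countably many of them: Cantor's diagonal argument gives a
      contradiction (lemma no_comb). *)

From Stdlib Require Import Reals List Arith Lia Lra Classical ClassicalEpsilon
  FunctionalExtensionality PropExtensionality ProofIrrelevance Cantor Wf_nat.
From mathcomp Require classical_sets.

(* Every finite list drawn from the union of a chain of families (plus a fixed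
   family F0) is drawn from a single member of the chain (plus F0); this is the
   chain condition needed for Zorn's lemma. *)
Lemma list_in_chain_member (T : Type) (Ch : (T -> Prop) -> Prop) (F0 : T -> Prop) :
  classical_sets.total_on Ch classical_sets.subset ->
  forall l : list T,
    (forall Y, In Y l -> classical_sets.bigcup Ch (fun X => X) Y \/ F0 Y) ->
    (forall Y, In Y l -> F0 Y) \/ exists X, Ch X /\ forall Y, In Y l -> X Y \/ F0 Y.
Proof.
  intros Htot l; induction l as [|Y l IH]; intros Hl.
  { left; intros Y []. }
  assert (Htail : forall Z, In Z l -> classical_sets.bigcup Ch (fun X => X) Z \/ F0 Z)
    by (intros Z HZ; apply Hl; right; exact HZ).
  destruct (Hl Y (or_introl eq_refl)) as [[X1 HX1 HY]|HY].
  - right. destruct (IH Htail) as [Hall|[X0 [HX0 Hl0]]].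
    + exists X1; split; auto. intros Z [<-|HZ]; auto.
    + destruct (Htot X0 X1 HX0 HX1) as [Hsub|Hsub].
      * exists X1; split; auto. intros Z [<-|HZ]; auto. destruct (Hl0 Z HZ); auto.
      * exists X0; split; auto. intros Z [<-|HZ]; auto.
  - destruct (IH Htail) as [Hall|[X0 [HX0 Hl0]]].
    + left. intros Z [<-|HZ]; auto.
    + right. exists X0; split; auto. intros Z [<-|HZ]; auto.
Qed.

Lemma iter_cons_contains (X : Type) (ch : list X -> X) : forall k n, k < n ->
  In (ch (Nat.iter k (fun l => ch l :: l) nil)) (Nat.iter n (fun l => ch l :: l) nil).
Proof. intros k n H; induction H; simpl; auto. Qed.

Fixpoint list_code (l : list (nat * nat)) : nat :=
  match l with
  | nil => 0
  | ij :: l' => S (to_nat (to_nat ij, list_code l'))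
  end.

Lemma list_code_inj : forall l l', list_code l = list_code l' -> l = l'.
Proof.
  induction l as [|ij l IH]; intros [|ij' l'] H; cbn [list_code] in H;
    try discriminate; auto.
  apply Nat.succ_inj, (f_equal of_nat) in H. rewrite !cancel_of_to in H.
  injection H as Hij Hl. apply (f_equal of_nat) in Hij. rewrite !cancel_of_to in Hij.
  subst. f_equal. apply IH; exact Hl.
Qed.

Lemma no_injection_bool_seq (h : (nat -> bool) -> nat) :
  ~ (forall f g, h f = h g -> forall i, f i = g i).
Proof.
  intro Hh.
  set (pick := fun k => epsilon (inhabits (fun _ : nat => false)) (fun f => h f = k)).
  set (diag := fun k => negb (pick k k)).
  assert (Hpick : h (pick (h diag)) = h diag).
  { apply (epsilon_spec (inhabits (fun _ : nat => false)) (fun f => h f = h diag)).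
    exists diag; reflexivity. }
  pose proof (Hh _ _ Hpick (h diag)) as H.
  change (diag (h diag)) with (negb (pick (h diag) (h diag))) in H.
  destruct (pick (h diag) (h diag)); discriminate.
Qed.

Definition rad (n : nat) : R := / (INR n + 1).

Lemma rad_pos : forall n, (0 < rad n)%R.
Proof. intro n. apply Rinv_0_lt_compat. pose proof (pos_INR n). lra. Qed.

Lemma rad_antitone : forall k n, k <= n -> (rad n <= rad k)%R.
Proof.
  intros k n H. apply Rinv_le_contravar.
  - pose proof (pos_INR k). lra.
  - apply le_INR in H. lra.
Qed.

Lemma rad_small : forall eps, (0 < eps)%R -> exists n, (rad n < eps)%R.
Proof.
  intros eps Heps. destruct (archimed_cor1 eps Heps) as [N [HN HN0]].
  exists N. eapply Rle_lt_trans; [|exact HN]. apply Rinv_le_contravar.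
  - apply lt_0_INR; exact HN0.
  - lra.
Qed.

Section LargeScaleGroup.
Variables (G : Type) (mul : G -> G -> G) (inv : G -> G) (e : G) (E : G -> G -> Prop).
Hypothesis Hgrp : group_laws mul inv e.
Hypothesis Hsym : forall x y, E x y -> E y x.
Hypothesis Hconn : connected_graph E.
Hypothesis Hinv : forall g x y n, dle E (mul g x) (mul g y) n <-> dle E x y n.

Notation d := (dle E).
Notation bnd := (ls_bounded E).
Notation CC := (coarsely_clopen E mul).

Lemma walk_app : forall n x y, walk E n x y -> forall m z, walk E m y z -> walk E (n + m) x z.
Proof. induction 1; intros; simpl; auto. econstructor; eauto. Qed.

Lemma walk_rev : forall n x y, walk E n x y -> walk E n y x.
Proof.
  induction 1 as [|n x y z Hxy _ IH]; [constructor|].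
  replace (S n) with (n + 1) by lia. eapply walk_app; [exact IH|].
  econstructor; [apply Hsym; exact Hxy | constructor].
Qed.

Lemma dle_refl : forall x n, d x x n.
Proof. intros; exists 0; split; [lia|constructor]. Qed.

Lemma dle_mono : forall x y n m, d x y n -> n <= m -> d x y m.
Proof. intros x y n m [k [? ?]] ?; exists k; split; auto; lia. Qed.

Lemma dle_trans : forall x y z n m, d x y n -> d y z m -> d x z (n + m).
Proof.
  intros x y z n m [k [? ?]] [k' [? ?]]; exists (k + k'); split; [lia|].
  eapply walk_app; eauto.
Qed.

Lemma dle_sym : forall x y n, d x y n -> d y x n.
Proof. intros x y n [k [? ?]]; exists k; split; auto; apply walk_rev; auto. Qed.

Lemma dle_edge : forall x y, E x y -> d x y 1.
Proof. intros; exists 1; split; auto. econstructor; eauto; constructor. Qed.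

Lemma dle1_cases : forall x y, d x y 1 -> x = y \/ E x y.
Proof.
  intros x y [m [Hm Hw]]. inversion Hw as [|k x' z z' Hxz Hzy]; subst; [left; auto|].
  inversion Hzy; subst; [right; auto | lia].
Qed.

Definition ball (n : nat) : G -> Prop := fun x => d e x n.

Lemma bounded_iff_in_ball : forall X, bnd X <-> exists n, forall x, X x -> ball n x.
Proof.
  intro X; split.
  - intros [x0 [n H]]. destruct (Hconn e x0) as [k Hk].
    exists (k + n). intros x Hx. eapply dle_trans; [exists k; split; eauto | apply H; auto].
  - intros [n H]; exists e, n; auto.
Qed.

Lemma ball_bounded : forall n, bnd (ball n).
Proof. intros; apply bounded_iff_in_ball; exists n; auto. Qed.

Lemma ball_mono : forall n m x, ball n x -> n <= m -> ball m x.
Proof. intros; eapply dle_mono; eauto. Qed.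

Lemma bounded_sub : forall X Y, (forall x, X x -> Y x) -> bnd Y -> bnd X.
Proof. intros X Y H [x0 [n Hn]]; exists x0, n; auto. Qed.

Lemma bounded_union : forall X Y, bnd X -> bnd Y -> bnd (fun x => X x \/ Y x).
Proof.
  intros X Y HX HY.
  apply bounded_iff_in_ball in HX as [n Hn]; apply bounded_iff_in_ball in HY as [m Hm].
  apply bounded_iff_in_ball; exists (n + m). intros x [H|H]; eapply ball_mono; eauto; lia.
Qed.

Lemma bounded_empty : forall X, (forall x, ~ X x) -> bnd X.
Proof. intros X H; exists e, 0; intros b Hb; exfalso; eapply H; eauto. Qed.

Lemma unbounded_inhabited : forall X, ~ bnd X -> exists x, X x.
Proof.
  intros X H. apply NNPP; intro H'. apply H, bounded_empty. intros x Hx; apply H'; eauto.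
Qed.

(* Right inverse and right identity follow from the left-sided group laws. *)
Lemma mulgV : forall x, mul x (inv x) = e.
Proof.
  destruct Hgrp as [A L V]. intro x.
  rewrite <- (L (mul x (inv x))), <- (V (inv x)) at 1.
  rewrite <- A, (A (inv x) x (inv x)), V, L. apply V.
Qed.

Lemma mulg1 : forall x, mul x e = x.
Proof. destruct Hgrp as [A L V]. intro x. rewrite <- (V x), A, mulgV. apply L. Qed.

Lemma refining_cover_diameter : forall (U : (G -> Prop) -> Prop) (B : G -> Prop) n,
  (forall b, B b -> ball n b) ->
  (forall V, U V -> exists g, forall x, V x -> exists b, B b /\ x = mul g b) ->
  forall V, U V -> forall x y, V x -> V y -> d x y (n + n).
Proof.
  intros U B n HB HU V HV x y Hx Hy. destruct (HU V HV) as [g Hg].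
  destruct (Hg x Hx) as [b1 [Hb1 ->]]. destruct (Hg y Hy) as [b2 [Hb2 ->]].
  apply Hinv. eapply dle_trans; [apply dle_sym|]; apply HB; auto.
Qed.

Lemma exit_edge : forall n a a', walk E n a a' -> forall A : G -> Prop, A a -> ~ A a' ->
  exists u v, A u /\ ~ A v /\ E u v /\ d a v n.
Proof.
  induction 1 as [|n x y z Hxy Hw IH]; intros A Ha Ha'; [contradiction|].
  destruct (classic (A y)) as [Hy|Hy].
  - destruct (IH A Hy Ha') as [u [v [? [? [? Hv]]]]]. exists u, v; repeat split; auto.
    replace (S n) with (1 + n) by lia. eapply dle_trans; eauto. apply dle_edge; auto.
  - exists x, y; repeat split; auto. eapply dle_mono; [apply dle_edge; auto | lia].
Qed.

Lemma cc_of_bounded_boundary : forall (A Bd : G -> Prop), bnd Bd ->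
  (forall u v, A u -> ~ A v -> E u v -> Bd v) -> CC A.
Proof.
  intros A Bd HBd HA U [_ [B0 [HB0 HU]]].
  apply bounded_iff_in_ball in HB0 as [n0 Hn0]. apply bounded_iff_in_ball in HBd as [N HN].
  pose proof (refining_cover_diameter U B0 n0 Hn0 HU) as diam.
  apply bounded_iff_in_ball. exists (N + (n0 + n0) + (n0 + n0 + (n0 + n0))).
  intros x [[V1 [HV1 [Hx1 [a [Ha1 Ha]]]]] [V2 [HV2 [Hx2 [a' [Ha2 Ha']]]]]].
  assert (Haa : d a a' ((n0 + n0) + (n0 + n0))) 
    by (eapply dle_trans; [apply (diam V1 HV1 a x) | apply (diam V2 HV2 x a')]; auto).
  destruct Haa as [k [Hk Hw]].
  destruct (exit_edge _ _ _ Hw A Ha Ha') as [u [v [Hu [Hv [Huv Hav]]]]].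
  apply (dle_mono _ _ (N + (n0 + n0 + k))); [|lia].
  eapply dle_trans; [exact (HN v (HA u v Hu Hv Huv))|].
  apply dle_sym. eapply dle_trans; [apply (diam V1 HV1 x a); auto | exact Hav].
Qed.

Definition edge_cover : (G -> Prop) -> Prop :=
  fun V => exists x y, d x y 1 /\ V = (fun z => z = x \/ z = y).

Lemma edge_cover_uniform : unif_bounded_cover E mul edge_cover.
Proof.
  split.
  - intro x. exists (fun z => z = x \/ z = x). split; auto. exists x, x; split; auto.
    apply dle_refl.
  - exists (ball 1). split; [apply ball_bounded|].
    intros V [x [y [Hxy ->]]]. exists x. destruct Hgrp as [A L V'].
    intros z [-> | ->].
    + exists e; split; [apply dle_refl | symmetry; apply mulg1].
    + exists (mul (inv x) y); split.
      * unfold ball. rewrite <- (V' x). apply Hinv; auto.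
      * rewrite A, mulgV, L. reflexivity.
Qed.

Lemma bounded_boundary_of_cc : forall A, CC A -> exists n,
  forall u v, A u -> ~ A v -> E u v -> ball n u /\ ball n v.
Proof.
  intros A HA.
  destruct (proj1 (bounded_iff_in_ball _) (HA _ edge_cover_uniform)) as [n Hn]. exists n.
  intros u v Hu Hv Huv.
  assert (HV : edge_cover (fun z => z = u \/ z = v))
    by (exists u, v; split; auto; apply dle_edge; auto).
  split; apply Hn; split; exists (fun z => z = u \/ z = v); repeat split; auto;
    solve [exists u; auto | exists v; auto].
Qed.

Lemma cc_compl : forall A, CC A -> CC (fun x => ~ A x).
Proof.
  intros A HA U HU. eapply bounded_sub; [|exact (HA U HU)].
  intros x [[V1 [? [? [a [? ?]]]]] [V2 [? [? [a' [? ?]]]]]].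
  split; [exists V2 | exists V1]; repeat split; auto.
  - exists a'; split; auto. apply NNPP; auto.
  - exists a; auto.
Qed.

Definition closed_outside (B A : G -> Prop) : Prop :=
  (forall x, A x -> ~ B x) /\ (forall x y, A x -> ~ B y -> d x y 1 -> A y).

(* For bounded B, B-closed sets have their edge boundary in B, so they are
   coarsely clopen. *)
Lemma closed_outside_cc : forall B A, bnd B -> closed_outside B A -> CC A.
Proof.
  intros B A HB [_ Hstep]. apply (cc_of_bounded_boundary A B HB).
  intros u v Hu Hv Huv. apply NNPP; intro Hb. apply Hv. eapply Hstep; eauto.
  apply dle_edge; auto.
Qed.

Lemma cc_full : CC (fun _ => True).
Proof.
  apply (closed_outside_cc (fun _ => False)).
  - apply bounded_empty; intros x H; exact H.
  - split; [intros x _ H; exact H | intros; exact I].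
Qed.

Definition union_of (P : (G -> Prop) -> Prop) : G -> Prop := fun x => exists C, P C /\ C x.

Lemma closed_outside_union : forall B (P : (G -> Prop) -> Prop),
  (forall C, P C -> closed_outside B C) -> closed_outside B (union_of P).
Proof.
  intros B P HP; split.
  - intros x [C [HC Hx]]. apply (proj1 (HP C HC)); auto.
  - intros x y [C [HC Hx]] Hy Hxy. exists C; split; auto. eapply (proj2 (HP C HC)); eauto.
Qed.

Lemma closed_outside_or : forall B X Y, closed_outside B X -> closed_outside B Y ->
  closed_outside B (fun x => X x \/ Y x).
Proof.
  intros B X Y [X1 X2] [Y1 Y2]; split.
  - intros x [H|H]; auto.
  - intros x y [H|H] Hy Hxy; [left; eapply X2 | right; eapply Y2]; eauto.
Qed.

Lemma chain1_in : forall A x y, chain1 E A x y -> A x /\ A y.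
Proof. induction 1; tauto. Qed.

Lemma chain1_trans : forall A x y z, chain1 E A x y -> chain1 E A y z -> chain1 E A x z.
Proof. intros A x y z H1 H2. induction H2; auto. eapply chain1_step; eauto. Qed.

Lemma chain1_sym : forall A x y, chain1 E A x y -> chain1 E A y x.
Proof.
  induction 1 as [|y z Hxy IH Hz Hyz]; [constructor; auto|].
  eapply chain1_trans; [|exact IH].
  eapply chain1_step; [constructor; auto | apply (chain1_in _ _ _ Hxy) | apply dle_sym; auto].
Qed.

Lemma chain1_mono : forall (A A' : G -> Prop), (forall x, A x -> A' x) ->
  forall x y, chain1 E A x y -> chain1 E A' x y.
Proof. intros A A' HA x y H; induction H; [constructor | eapply chain1_step]; eauto. Qed.

Lemma comp_chain : forall A C, is_comp1 E A C -> forall y z, C y -> C z -> chain1 E A y z.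
Proof.
  intros A C [x [Hx ->]] y z Hy Hz. eapply chain1_trans; [apply chain1_sym|]; eauto.
Qed.

Lemma comp_self : forall A x, A x -> is_comp1 E A (comp1 E A x) /\ comp1 E A x x.
Proof. intros A x Hx. split; [exists x; auto | constructor; auto]. Qed.

Lemma comp_eq_of_meet : forall A C C', is_comp1 E A C -> is_comp1 E A C' ->
  (exists z, C z /\ C' z) -> C = C'.
Proof.
  intros A C C' HC HC' [z [Hz Hz']].
  assert (Hincl : forall D D', is_comp1 E A D -> is_comp1 E A D' -> D z -> D' z ->
    forall w, D w -> D' w).
  { intros D D' HD [x' [_ ->]] HDz Hx'z w HDw.
    eapply chain1_trans; [exact Hx'z | apply (comp_chain A D HD); auto]. }
  extensionality w. apply propositional_extensionality. split; apply Hincl; auto.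
Qed.

Lemma comp_closed_outside : forall B C, is_comp1 E (fun x => ~ B x) C -> closed_outside B C.
Proof.
  intros B C [x [Hx ->]]. split.
  - intros y Hy. apply (chain1_in _ _ _ Hy).
  - intros y z Hy Hz Hyz. eapply chain1_step; eauto.
Qed.

Lemma chain_stays_inside : forall n (U : G -> Prop),
  (forall u v, U u -> ~ U v -> E u v -> ball n v) ->
  forall z y, chain1 E (fun x => ~ ball n x) z y -> U z -> U y.
Proof.
  intros n U HU z y H; induction H as [Hx | w w' Hc IH Hw' Hww']; intros Hz; auto.
  specialize (IH Hz). apply NNPP; intro Hn.
  destruct (dle1_cases _ _ Hww') as [<-|He]; auto. apply Hw'. apply (HU w w'); auto.
Qed.

Notation adm := (admissible_family E mul).
Notation EndsT := (Ends E mul).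

Definition mem (p : EndsT) (A : G -> Prop) : Prop := proj1_sig p A.

Lemma end_cc : forall p A, mem p A -> CC A.
Proof. intros p A H; apply (proj1 (proj1 (proj2_sig p)) A H). Qed.

Lemma end_list_unbounded : forall p l, (forall X, In X l -> mem p X) -> ~ bnd (list_inter l).
Proof. intros p l H; apply (proj2 (proj1 (proj2_sig p)) l H). Qed.

Lemma end_unbounded : forall p A, mem p A -> ~ bnd A.
Proof. intros p A H; apply (proj1 (proj1 (proj2_sig p)) A H). Qed.

Lemma list_inter_cons : forall (A : G -> Prop) l x,
  list_inter (A :: l) x <-> A x /\ list_inter l x.
Proof.
  intros; unfold list_inter; simpl; split.
  - intro H; split; [apply H; left; reflexivity | intros X HX; apply H; right; exact HX].
  - intros [H1 H2] X [HX|HX]; [subst; exact H1 | apply H2; exact HX].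
Qed.

Lemma list_split_off : forall (F : (G -> Prop) -> Prop) (A : G -> Prop) l,
  (forall X, In X l -> F X \/ X = A) ->
  exists l', (forall X, In X l' -> F X) /\ forall x, A x -> list_inter l' x -> list_inter l x.
Proof.
  intros F A l; induction l as [|X l IH]; intros Hl.
  - exists nil; split; [simpl; tauto | intros x _ _ Y []].
  - destruct IH as [l' [H1 H2]]; [intros Y HY; apply Hl; simpl; auto|].
    destruct (Hl X (or_introl eq_refl)) as [HX| ->].
    + exists (X :: l'); split.
      * intros Y [<-|HY]; auto.
      * intros x Hx Hi. apply list_inter_cons. apply list_inter_cons in Hi as [? ?]; auto.
    + exists l'; split; auto. intros x Hx Hi. apply list_inter_cons; auto.
Qed.

Lemma end_add : forall (p : EndsT) A, CC A ->
  (forall l, (forall X, In X l -> mem p X) -> ~ bnd (fun x => A x /\ list_inter l x)) ->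
  mem p A.
Proof.
  intros p A HA H.
  set (F' := fun X => proj1_sig p X \/ X = A).
  assert (Hadm : adm F').
  { split.
    - intros X [HX| ->]; [split; [eapply end_cc | eapply end_unbounded]; eauto|].
      split; auto. intro Hb. apply (H nil); [simpl; tauto|].
      eapply bounded_sub; [|exact Hb]. tauto.
    - intros l Hl. destruct (list_split_off (proj1_sig p) A l Hl) as [l' [H1 H2]].
      intro Hb. apply (H l' H1). eapply bounded_sub; [|exact Hb]. intros x [? ?]; auto. }
  apply (proj2 (proj2_sig p) F' Hadm); [intros X HX; left; auto | right; auto].
Qed.

Lemma end_upward : forall (p : EndsT) A A', mem p A' -> (forall x, A' x -> A x) -> CC A ->
  mem p A.
Proof.
  intros p A A' H' Hsub HA. apply end_add; auto. intros l Hl Hb.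
  apply (end_list_unbounded p (A' :: l)); [intros X [<-|HX]; auto|].
  eapply bounded_sub; [|exact Hb]. intros x Hx. apply list_inter_cons in Hx as [? ?]; auto.
Qed.

Lemma end_ultra : forall (p : EndsT) A, CC A -> mem p A \/ mem p (fun x => ~ A x).
Proof.
  intros p A HA. destruct (classic (mem p A)) as [?|H1]; auto. right.
  apply end_add; [apply cc_compl; auto|]. intros l Hl Hb. apply H1. apply end_add; auto.
  intros l' Hl' Hb'. apply (end_list_unbounded p (l ++ l')).
  - intros X HX; apply in_app_or in HX as [?|?]; auto.
  - eapply bounded_sub; [|exact (bounded_union _ _ Hb Hb')]. intros x Hx.
    destruct (classic (A x)); [right | left]; split; auto;
      intros X HX; apply Hx, in_or_app; auto.
Qed.

Lemma end_meet_unbounded : forall (p : EndsT) X Y, mem p X -> mem p Y ->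
  ~ bnd (fun x => X x /\ Y x).
Proof.
  intros p X Y HX HY Hb. apply (end_list_unbounded p (X :: Y :: nil)).
  - intros Z [<-|[<-|[]]]; auto.
  - eapply bounded_sub; [|exact Hb]. intros x Hx. split; apply Hx; simpl; auto.
Qed.

Lemma end_meet : forall (p : EndsT) X Y, mem p X -> mem p Y -> exists x, X x /\ Y x.
Proof. intros. apply unbounded_inhabited. eapply end_meet_unbounded; eauto. Qed.

Lemma end_prime : forall (p : EndsT) X Y, CC X -> CC Y -> mem p (fun x => X x \/ Y x) ->
  mem p X \/ mem p Y.
Proof.
  intros p X Y HX HY H.
  destruct (end_ultra p X HX) as [?|H1]; auto. destruct (end_ultra p Y HY) as [?|H2]; auto.
  exfalso.
  apply (end_list_unbounded p
    ((fun x => X x \/ Y x) :: (fun x => ~ X x) :: (fun x => ~ Y x) :: nil)).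
  - intros Z [<-|[<-|[<-|[]]]]; auto.
  - apply bounded_empty. intros w Hw.
    pose proof (Hw _ (or_introl eq_refl)) as A1.
    pose proof (Hw _ (or_intror (or_introl eq_refl))) as A2.
    pose proof (Hw _ (or_intror (or_intror (or_introl eq_refl)))) as A3.
    simpl in *; tauto.
Qed.

Lemma end_full : forall (p : EndsT), mem p (fun _ => True).
Proof.
  intro p. apply end_add; [exact cc_full|]. intros l Hl Hb.
  apply (end_list_unbounded p l Hl). eapply bounded_sub; [|exact Hb]. intros x Hx; split; auto.
Qed.

Lemma end_outside_ball : forall (p : EndsT) n, mem p (fun x => ~ ball n x).
Proof.
  intros p n. apply end_add.
  - apply (closed_outside_cc (ball n)); [apply ball_bounded | split; auto].
  - intros l Hl Hb. apply (end_list_unbounded p l Hl).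
    eapply bounded_sub; [|exact (bounded_union _ _ (ball_bounded n) Hb)].
    intros x Hx. destruct (classic (ball n x)); [left|right]; auto.
Qed.

Lemma end_extension : forall (F0 : (G -> Prop) -> Prop), (forall X, F0 X -> CC X) ->
  (forall l, (forall X, In X l -> F0 X) -> ~ bnd (list_inter l)) ->
  exists p : EndsT, forall X, F0 X -> mem p X.
Proof.
  intros F0 HCC HFIP.
  assert (Hunbnd : forall X, F0 X -> ~ bnd X).
  { intros X HX Hb. apply (HFIP (X :: nil)); [intros Y [<-|[]]; auto|].
    eapply bounded_sub; [|exact Hb]. intros x Hx; apply Hx; simpl; auto. }
  set (P := fun X : (G -> Prop) -> Prop => adm (fun Y => X Y \/ F0 Y)).
  destruct (@classical_sets.Zorn_bigcup (G -> Prop) P) as [A [HA Hmax]].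
  - intros Ch HChP Htot. split.
    + intros Y [[X1 HX1 HY]|HY]; [apply (proj1 (HChP X1 HX1) Y); auto | split; auto].
    + intros l Hl.
      destruct (list_in_chain_member _ Ch F0 Htot l Hl) as [Hall|[X0 [HX0 Hl0]]].
      * apply HFIP; auto.
      * apply (proj2 (HChP X0 HX0) l Hl0).
  - assert (Hend : is_end E mul (fun Y => A Y \/ F0 Y)).
    { split; [exact HA|]. intros F' [HF1 HF2] Hsub Y HY. apply NNPP; intro HnY.
      apply (Hmax F').
      - split; [intros Z HZ; apply Hsub; left; auto|].
        intro HFA; apply HnY; left; apply HFA; auto.
      - split.
        + intros Z [HZ|HZ]; apply HF1; auto.
        + intros l Hl. apply HF2. intros Z HZ. destruct (Hl Z HZ); auto. }
    exists (exist _ _ Hend). intros X HX. right; auto.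
Qed.

Section Compactness.
Variables (I : Type) (Op : I -> EndsT -> Prop) (W : G -> Prop).

Definition cover_family (A : G -> Prop) : Prop :=
  A = W \/ exists U i, CC U /\ (exists p, mem p U) /\ (forall q, mem q U -> Op i q) /\
    A = (fun x => ~ U x).

Lemma cover_family_indices : forall l, (forall A, In A l -> cover_family A) ->
  exists L, (forall i, In i L -> exists p, Op i p) /\
    forall q, mem q W -> (forall i, In i L -> ~ Op i q) -> forall A, In A l -> mem q A.
Proof.
  induction l as [|A l IH]; intros Hl.
  { exists nil; split; [intros i [] | intros q _ _ A []]. }
  destruct IH as [L [HL1 HL2]]; [intros X HX; apply Hl; right; exact HX|].
  destruct (Hl A (or_introl eq_refl)) as [->|[U [i [HU [[p HpU] [HUi ->]]]]]].
  - exists L; split; auto. intros q HqW Hq X [<-|HX]; auto.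
  - exists (i :: L); split.
    + intros i' [<-|Hi']; [exists p; apply HUi; auto | auto].
    + intros q HqW Hq X [<-|HX].
      * destruct (end_ultra q U HU) as [HqU|?]; auto.
        exfalso; apply (Hq i); [left; auto | apply HUi; auto].
      * apply HL2; auto. intros i' Hi'; apply Hq; right; auto.
Qed.

Lemma basic_open_compact : (forall i, ends_open (Op i)) -> CC W ->
  (forall p, mem p W -> exists i, Op i p) ->
  exists L : list I, (forall i, In i L -> exists p, Op i p) /\
    forall q, mem q W -> exists i, In i L /\ Op i q.
Proof.
  intros Hopen HW Hcov. apply NNPP; intro Hno.
  destruct (end_extension cover_family) as [r Hr].
  - intros X [->|[U [_ [HU [_ [_ ->]]]]]]; auto. apply cc_compl; auto.
  - intros l Hl Hb. destruct (cover_family_indices l Hl) as [L [HL1 HL2]].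
    apply Hno. exists L; split; auto. intros q HqW. apply NNPP; intro Hq.
    apply (end_list_unbounded q l); [|exact Hb].
    apply HL2; auto. intros i Hi Hiq; apply Hq; exists i; auto.
  - assert (HrW : mem r W) by (apply Hr; left; auto).
    destruct (Hcov r HrW) as [i Hi]. destruct (Hopen i r Hi) as [U [HU [HrU HUO]]].
    assert (HrnU : mem r (fun x => ~ U x)).
    { apply Hr; right; exists U, i; repeat split; auto. exists r; auto. }
    destruct (end_meet r _ _ HrU HrnU) as [x [? ?]]; auto.
Qed.

End Compactness.

Lemma end_ext : forall p q : EndsT, (forall A, mem p A -> mem q A) ->
  (forall A, mem q A -> mem p A) -> p = q.
Proof.
  intros [Fp Hp] [Fq Hq] Hpq Hqp.
  assert (Fp = Fq).
  { extensionality A. apply propositional_extensionality. split; [apply Hpq | apply Hqp]. }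
  subst. f_equal. apply proof_irrelevance.
Qed.

Lemma end_picks_member : forall (p : EndsT) B (Q : (G -> Prop) -> Prop) l, bnd B ->
  (forall C, Q C -> closed_outside B C) ->
  mem p (union_of (fun C => In C l /\ Q C)) -> exists C, In C l /\ Q C /\ mem p C.
Proof.
  intros p B Q l HB HQ; induction l as [|X l IH]; intros Hm.
  { exfalso. apply (end_unbounded p _ Hm), bounded_empty. intros x [C [[[] _] _]]. }
  set (Rest := union_of (fun C => In C l /\ Q C)).
  assert (HRest : closed_outside B Rest)
    by (apply closed_outside_union; intros C [_ HC]; auto).
  destruct (classic (Q X)) as [HX|HX].
  - assert (Hm' : mem p (fun x => X x \/ Rest x)).
    { eapply end_upward; [exact Hm| |].
      - intros x [C [[[<-|HC] HQC] Hx]]; [left; auto | right; exists C; auto].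
      - apply (closed_outside_cc B); auto. apply closed_outside_or; auto. }
    destruct (end_prime p _ _ (closed_outside_cc B _ HB (HQ X HX))
      (closed_outside_cc B _ HB HRest) Hm') as [H|H].
    + exists X; simpl; auto.
    + destruct (IH H) as [C [? ?]]. exists C; simpl; auto.
  - assert (Hm' : mem p Rest).
    { eapply end_upward; [exact Hm| |apply (closed_outside_cc B); auto].
      intros x [C [[[<-|HC] HQC] Hx]]; [contradiction | exists C; auto]. }
    destruct (IH Hm') as [C [? ?]]. exists C; simpl; auto.
Qed.

Lemma end_component_unique : forall n (p : EndsT) C C',
  is_comp1 E (fun x => ~ ball n x) C -> is_comp1 E (fun x => ~ ball n x) C' ->
  mem p C -> mem p C' -> C = C'.
Proof. intros. eapply comp_eq_of_meet; eauto. eapply end_meet; eauto. Qed.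

Definition separated (n : nat) (p q : EndsT) : Prop :=
  exists C, is_comp1 E (fun x => ~ ball n x) C /\ mem p C /\ ~ mem q C.

Lemma separated_irrefl : forall n p, ~ separated n p p.
Proof. intros n p [C [_ [? ?]]]; auto. Qed.

Lemma separated_split : forall n p q r, separated n p r -> separated n p q \/ separated n q r.
Proof.
  intros n p q r [C [HC [HpC HrC]]].
  destruct (classic (mem q C)); [right | left]; exists C; auto.
Qed.

Section Metrizable.
Hypothesis bounded_comps_bounded :
  forall n, bnd (union_bounded_comps E (fun x => ~ ball n x)).
Hypothesis unbounded_comps_finite :
  forall n, finite_family (fun C => is_comp1 E (fun x => ~ ball n x) C /\ ~ bnd C).

Lemma end_selects_component : forall (p : EndsT) n,
  exists C, is_comp1 E (fun x => ~ ball n x) C /\ mem p C.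
Proof.
  intros p n. set (Q := fun C => is_comp1 E (fun x => ~ ball n x) C /\ ~ bnd C).
  destruct (unbounded_comps_finite n) as [l Hl].
  assert (HQ : forall C, Q C -> closed_outside (ball n) C)
    by (intros C [HC _]; apply comp_closed_outside; auto).
  set (Y := union_of (fun C => In C l /\ Q C)).
  assert (HY : mem p Y).
  { assert (HYcl : closed_outside (ball n) Y)
      by (apply closed_outside_union; intros C [_ HC]; auto).
    destruct (end_ultra p Y (closed_outside_cc _ _ (ball_bounded n) HYcl)) as [?|Hc]; auto.
    exfalso. apply (end_meet_unbounded p _ _ (end_outside_ball p n) Hc).
    eapply bounded_sub; [|exact (bounded_comps_bounded n)].
    intros x [Hx HnY]. destruct (comp_self (fun x => ~ ball n x) x Hx) as [Hc1 Hc2].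
    destruct (classic (bnd (comp1 E (fun x => ~ ball n x) x))) as [Hb|Hb].
    - exists (comp1 E (fun x => ~ ball n x) x); auto.
    - exfalso. apply HnY. exists (comp1 E (fun x => ~ ball n x) x).
      repeat split; auto. }
  destruct (end_picks_member p (ball n) Q l (ball_bounded n) HQ HY) as [C [_ [[? ?] ?]]].
  exists C; auto.
Qed.

(* Separation is symmetric, since q also selects some component. *)
Lemma separated_sym : forall n p q, separated n p q -> separated n q p.
Proof.
  intros n p q [C [HC [HpC HqC]]].
  destruct (end_selects_component q n) as [C' [HC' HqC']].
  exists C'; repeat split; auto. intro HpC'. apply HqC.
  rewrite (end_component_unique n p C C'); auto.
Qed.

Lemma separated_succ : forall n p q, separated n p q -> separated (S n) p q.
Proof.
  intros n p q [C [HC [HpC HqC]]].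
  destruct (end_selects_component p (S n)) as [C1 [HC1 HpC1]].
  exists C1; repeat split; auto. intro HqC1. apply HqC.
  eapply end_upward; [exact HqC1| |].
  - destruct (end_meet p _ _ HpC HpC1) as [z [Hz Hz1]].
    intros y Hy. destruct HC as [xc [_ ->]]. eapply chain1_trans; [exact Hz|].
    eapply chain1_mono; [|apply (comp_chain _ _ HC1 z y Hz1 Hy)].
    intros x Hx Hb. apply Hx. eapply ball_mono; eauto.
  - apply (closed_outside_cc (ball n)); [apply ball_bounded | apply comp_closed_outside; auto].
Qed.

Lemma separated_mono : forall k n p q, k <= n -> separated k p q -> separated n p q.
Proof. intros k n p q Hk; induction Hk; auto. intro; apply separated_succ; auto. Qed.

Lemma end_transfer : forall U n (p q : EndsT),
  (forall u v, U u -> ~ U v -> E u v -> ball n v) ->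
  mem p U -> ~ separated n p q -> mem q U.
Proof.
  intros U n p q HU HpU Hsep.
  destruct (end_selects_component p n) as [C [HC HpC]].
  destruct (end_meet p _ _ HpC HpU) as [z [Hz HzU]].
  assert (HqC : mem q C) by (apply NNPP; intro; apply Hsep; exists C; auto).
  eapply end_upward; [exact HqC| |eapply end_cc; eauto].
  intros y Hy. eapply chain_stays_inside; eauto. eapply comp_chain; eauto.
Qed.

Lemma end_transfer_cc : forall U (p q : EndsT), mem p U -> (forall n, ~ separated n p q) ->
  mem q U.
Proof.
  intros U p q HpU Hsep. destruct (bounded_boundary_of_cc U (end_cc p U HpU)) as [n Hn].
  apply (end_transfer U n p); auto. intros; apply (Hn u v); auto.
Qed.

Lemma never_separated_eq : forall p q : EndsT, (forall n, ~ separated n p q) -> p = q.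
Proof.
  intros p q H. apply end_ext; intros A HA; eapply end_transfer_cc; eauto.
  intros n Hn; apply (H n), separated_sym; auto.
Qed.

Lemma first_separation : forall p q, (exists n, separated n p q) ->
  exists n, separated n p q /\ forall k, separated k p q -> n <= k.
Proof.
  intros p q H.
  destruct (dec_inh_nat_subset_has_unique_least_element _ (fun n => classic _) H)
    as [n [Hn _]].
  exists n; exact Hn.
Qed.

Definition sep_dist (p q : EndsT) : R :=
  match excluded_middle_informative (exists n, separated n p q) with
  | left H => rad (proj1_sig (constructive_indefinite_description _ (first_separation p q H)))
  | right _ => 0
  end.

Lemma sep_dist_spec : forall p q, ((forall n, ~ separated n p q) /\ sep_dist p q = 0%R) \/
  exists n, separated n p q /\ (forall k, separated k p q -> n <= k) /\ sep_dist p q = rad n.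
Proof.
  intros p q. unfold sep_dist. destruct (excluded_middle_informative _) as [H|H].
  - right. destruct (constructive_indefinite_description _ _) as [n [Hn Hl]]. simpl. eauto.
  - left. split; auto. intros n Hn; apply H; eauto.
Qed.

Lemma sep_dist_nonneg : forall p q, (0 <= sep_dist p q)%R.
Proof.
  intros p q. destruct (sep_dist_spec p q) as [[_ ->]|[n [_ [_ ->]]]]; [lra|].
  left; apply rad_pos.
Qed.

Lemma sep_dist_ge : forall n p q, separated n p q -> (rad n <= sep_dist p q)%R.
Proof.
  intros n p q Hn. destruct (sep_dist_spec p q) as [[H _]|[n' [_ [Hl ->]]]].
  - exfalso; eapply H; eauto.
  - apply rad_antitone, Hl; auto.
Qed.

Lemma sep_dist_le : forall n p q, ~ separated n p q -> (sep_dist p q <= rad (S n))%R.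
Proof.
  intros n p q Hn. destruct (sep_dist_spec p q) as [[_ ->]|[n' [Hn' [_ ->]]]].
  - left; apply rad_pos.
  - apply rad_antitone. destruct (le_lt_dec n' n) as [Hle|]; [|lia].
    exfalso; apply Hn; eapply separated_mono; eauto.
Qed.

Lemma sep_dist_sym : forall p q, sep_dist p q = sep_dist q p.
Proof.
  intros p q.
  assert (Hs : forall n, separated n p q <-> separated n q p)
    by (split; apply separated_sym).
  destruct (sep_dist_spec p q) as [[A1 ->]|[n [A1 [A2 ->]]]];
  destruct (sep_dist_spec q p) as [[B1 ->]|[n' [B1 [B2 ->]]]]; auto.
  - exfalso; apply (A1 n'), Hs; auto.
  - exfalso; apply (B1 n), Hs; auto.
  - replace n' with n; auto. apply Nat.le_antisymm; [apply A2 | apply B2]; apply Hs; auto.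
Qed.

Lemma sep_dist_triangle : forall p q r, (sep_dist p r <= sep_dist p q + sep_dist q r)%R.
Proof.
  intros p q r. pose proof (sep_dist_nonneg p q). pose proof (sep_dist_nonneg q r).
  destruct (sep_dist_spec p r) as [[_ ->]|[n [Hn [_ ->]]]]; [lra|].
  destruct (separated_split n p q r Hn) as [Hd|Hd]; apply sep_dist_ge in Hd; lra.
Qed.

Lemma sep_dist_zero : forall p q, sep_dist p q = 0%R <-> p = q.
Proof.
  intros p q; split.
  - intro H. destruct (sep_dist_spec p q) as [[A1 _]|[n [_ [_ Hm]]]].
    + apply never_separated_eq; auto.
    + pose proof (rad_pos n). lra.
  - intros <-. destruct (sep_dist_spec p p) as [[_ ?]|[n [A1 _]]]; auto.
    exfalso; eapply separated_irrefl; eauto.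
Qed.

(* sep_dist induces the topology of Ends(G): a basic set U_end contains the
   sep_dist-ball of radius rad n about each of its ends (n bounding the edge
   boundary of U), and each such ball contains the basic set of a component. *)
Lemma metrizable : metrizable_ends E mul.
Proof.
  exists sep_dist. split; [exact sep_dist_zero|].
  split; [exact sep_dist_sym|]. split; [exact sep_dist_triangle|].
  intro O; split.
  - intros HO p Hp. destruct (HO p Hp) as [U [HU [HpU HUO]]].
    destruct (bounded_boundary_of_cc U HU) as [n Hn].
    exists (rad n). split; [apply rad_pos|].
    intros q Hq. apply HUO. apply (end_transfer U n p q); auto.
    + intros u v ? ? ?; apply (Hn u v); auto.
    + intro Hsep. apply sep_dist_ge in Hsep. lra.
  - intros HO p Hp. destruct (HO p Hp) as [eps [Heps Hball]].
    destruct (rad_small eps Heps) as [N HN].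
    destruct (end_selects_component p N) as [C [HC HpC]].
    exists C. split; [|split; auto].
    + apply (closed_outside_cc (ball N)); [apply ball_bounded | apply comp_closed_outside; auto].
    + intros q HqC. apply Hball.
      assert (Hsep : ~ separated N p q).
      { intros [C' [HC' [HpC' HqC']]]. apply HqC'.
        rewrite <- (end_component_unique N p C C'); auto. }
      pose proof (sep_dist_le N p q Hsep). pose proof (rad_antitone N (S N) (Nat.le_succ_diag_r N)).
      lra.
Qed.

End Metrizable.

Definition block (K : nat -> G -> Prop) (i : nat) : G -> Prop :=
  union_of (fun C => exists j, C = K (to_nat (i, j))).

Record comb (B : G -> Prop) (K : nat -> G -> Prop) : Prop := {
  comb_closed : forall k, closed_outside B (K k);
  comb_disjoint : forall k k' x, K k x -> K k' x -> k = k';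
  comb_blocks_unbounded : forall i, ~ bnd (block K i) }.

Definition comb_union (K : nat -> G -> Prop) (f : nat -> bool) : G -> Prop :=
  union_of (fun C => exists k, f (fst (of_nat k)) = true /\ C = K k).

Section Comb.
Variables (B : G -> Prop) (K : nat -> G -> Prop).
Hypothesis HB : bnd B.
Hypothesis HK : comb B K.

Lemma comb_union_cc : forall f, CC (comb_union K f).
Proof.
  intro f. apply (closed_outside_cc B _ HB), closed_outside_union.
  intros C [k [_ ->]]. apply (comb_closed _ _ HK).
Qed.

Lemma block_cc : forall i, CC (block K i).
Proof.
  intro i. apply (closed_outside_cc B _ HB), closed_outside_union.
  intros C [j ->]. apply (comb_closed _ _ HK).
Qed.

Lemma end_in_block : forall i, exists p : EndsT, mem p (block K i).
Proof.
  intro i. destruct (end_extension (fun X => X = block K i)) as [p Hp].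
  - intros X ->; apply block_cc.
  - intros l Hl Hb. apply (comb_blocks_unbounded _ _ HK i). eapply bounded_sub; [|exact Hb].
    intros x Hx X HX. rewrite (Hl X HX). exact Hx.
  - exists p; apply Hp; auto.
Qed.

(* If f and g differ at i, some end (one containing D_i) separates W_f and W_g. *)
Lemma comb_union_separates : forall f g i, f i = true -> g i = false ->
  exists p : EndsT, mem p (comb_union K f) /\ ~ mem p (comb_union K g).
Proof.
  intros f g i Hf Hg. destruct (end_in_block i) as [p Hp]. exists p; split.
  - eapply end_upward; [exact Hp| |apply comb_union_cc].
    intros x [C [[j ->] Hx]]. exists (K (to_nat (i, j))). split; auto.
    exists (to_nat (i, j)). rewrite cancel_of_to; auto.
  - intro HpW. destruct (end_meet p _ _ Hp HpW) as [x [[C [[j ->] Hx]] [C' [[k [Hgk ->]] Hx']]]].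
    rewrite <- (comb_disjoint _ _ HK _ _ _ Hx Hx'), cancel_of_to in Hgk. simpl in Hgk. congruence.
Qed.

End Comb.

Section NotMetrizable.
Variable m : EndsT -> EndsT -> R.
Hypothesis m_zero : forall p q, m p q = 0%R <-> p = q.
Hypothesis m_sym : forall p q, m p q = m q p.
Hypothesis m_triangle : forall p q r, (m p r <= m p q + m q r)%R.
Hypothesis m_topology : forall O, ends_open O <->
  (forall p, O p -> exists eps, (0 < eps)%R /\ forall q, (m p q < eps)%R -> O q).

Lemma metric_ball_open : forall c r, ends_open (fun q => (m c q < r)%R).
Proof.
  intros c r. apply m_topology. intros p Hp. exists (r - m c p)%R. split; [lra|].
  intros q Hq. pose proof (m_triangle c p q). lra.
Qed.

Lemma finite_net : forall n, exists l : list EndsT, forall q, exists c, In c l /\ (m c q < rad n)%R.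
Proof.
  intro n.
  destruct (basic_open_compact EndsT (fun c q => (m c q < rad n)%R) (fun _ => True))
    as [L [_ HL]].
  - intro; apply metric_ball_open.
  - apply cc_full.
  - intros p _. exists p. rewrite (proj2 (m_zero p p) eq_refl). apply rad_pos.
  - exists L. intros q. destruct (HL q (end_full q)) as [c [? ?]]; eauto.
Qed.

Lemma countable_centers (c0 : EndsT) : exists ctr : nat * nat -> EndsT,
  forall n q, exists j, (m (ctr (n, j)) q < rad n)%R.
Proof.
  destruct (choice _ finite_net) as [net Hnet].
  exists (fun ij => nth (snd ij) (net (fst ij)) c0). intros n q.
  destruct (Hnet n q) as [c [Hc Hcq]]. destruct (In_nth _ _ c0 Hc) as [j [_ Hj]].
  exists j. simpl. rewrite Hj. exact Hcq.
Qed.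

Lemma clopen_ball_cover (ctr : nat * nat -> EndsT) :
  (forall n q, exists j, (m (ctr (n, j)) q < rad n)%R) ->
  forall W, CC W -> exists L : list (nat * nat),
    (forall ij q, In ij L -> (m (ctr ij) q < rad (fst ij))%R -> mem q W) /\
    (forall q, mem q W -> exists ij, In ij L /\ (m (ctr ij) q < rad (fst ij))%R).
Proof.
  intros Hctr W HW.
  set (inside := fun ij => forall q, (m (ctr ij) q < rad (fst ij))%R -> mem q W).
  destruct (basic_open_compact (nat * nat)
    (fun ij q => (m (ctr ij) q < rad (fst ij))%R /\ inside ij) W) as [L [HL1 HL2]].
  - intro ij. intros p [Hp Hin]. destruct (metric_ball_open (ctr ij) (rad (fst ij)) p Hp)
      as [U [HU [HpU HUO]]].
    exists U; repeat split; auto.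
  - exact HW.
  - intros p Hp.
    assert (Hop : ends_open (fun q => mem q W)) by (intros p' Hp'; exists W; auto).
    destruct (proj1 (m_topology _) Hop p Hp) as [eps [Heps Hball]].
    destruct (rad_small (eps / 2) ltac:(lra)) as [N HN].
    destruct (Hctr N p) as [j Hj].
    exists (N, j). split; [exact Hj|]. intros q Hq. apply Hball.
    simpl in Hq. pose proof (m_triangle p (ctr (N, j)) q). rewrite (m_sym p (ctr (N, j))) in H. lra.
  - exists L. split.
    + intros ij q Hij Hq. destruct (HL1 ij Hij) as [p [_ Hin]]. apply Hin; exact Hq.
    + intros q Hq. destruct (HL2 q Hq) as [ij [? [? _]]]; eauto.
Qed.

(* A compact metric space has only countably many clopen sets: there is a code
   into nat such that equal codes force equal clopen sets of ends. *)
Lemma clopen_code (c0 : EndsT) : exists code : (G -> Prop) -> nat,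
  forall W V, CC W -> CC V -> code W = code V -> forall q, mem q W -> mem q V.
Proof.
  destruct (countable_centers c0) as [ctr Hctr].
  destruct (choice (fun W L => CC W ->
    (forall ij q, In ij L -> (m (ctr ij) q < rad (fst ij))%R -> mem q W) /\
    (forall q, mem q W -> exists ij, In ij L /\ (m (ctr ij) q < rad (fst ij))%R)))
    as [cover Hcover].
  { intro W. destruct (classic (CC W)) as [HW|HW].
    - destruct (clopen_ball_cover ctr Hctr W HW) as [L HL]. exists L; auto.
    - exists nil. intro; contradiction. }
  exists (fun W => list_code (cover W)). intros W V HW HV Hcode q Hq.
  apply list_code_inj in Hcode.
  destruct (proj2 (Hcover W HW) q Hq) as [ij [Hij Hq']].
  rewrite Hcode in Hij. exact (proj1 (Hcover V HV) ij q Hij Hq').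
Qed.

(* In a metrizable space of ends there is no comb: f |-> code W_f would
   be an injection of nat -> bool into nat. *)
Lemma no_comb : forall B K, bnd B -> comb B K -> False.
Proof.
  intros B K HB HK. destruct (end_in_block B K HB HK 0) as [c0 _].
  destruct (clopen_code c0) as [code Hcode].
  apply (no_injection_bool_seq (fun f => code (comb_union K f))).
  intros f g Hfg i.
  pose proof (comb_union_cc B K HB HK f) as Hf. pose proof (comb_union_cc B K HB HK g) as Hg.
  destruct (f i) eqn:Hfi, (g i) eqn:Hgi; auto; exfalso.
  - destruct (comb_union_separates B K HB HK f g i Hfi Hgi) as [p [H1 H2]].
    exact (H2 (Hcode _ _ Hf Hg Hfg p H1)).
  - destruct (comb_union_separates B K HB HK g f i Hgi Hfi) as [p [H1 H2]].
    exact (H2 (Hcode _ _ Hg Hf (eq_sym Hfg) p H1)).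
Qed.

End NotMetrizable.

Lemma comb_of_components : forall B (K : nat -> G -> Prop),
  (forall n, is_comp1 E (fun x => ~ B x) (K n)) ->
  (forall n n', n < n' -> K n <> K n') ->
  (forall i, ~ bnd (block K i)) -> comb B K.
Proof.
  intros B K Hcomp Hdist Hblocks. split; auto.
  - intro n. apply comp_closed_outside, Hcomp.
  - intros n n' x Hx Hx'.
    assert (Heq : K n = K n') by (apply (comp_eq_of_meet _ _ _ (Hcomp n) (Hcomp n')); eauto).
    destruct (lt_eq_lt_dec n n') as [[Hlt|?]|Hlt]; auto; exfalso.
    + exact (Hdist n n' Hlt Heq).
    + exact (Hdist n' n Hlt (eq_sym Heq)).
Qed.

(* Condition (2) yields a comb: enumerate infinitely many unbounded components,
   each chosen fresh with respect to the previous ones. *)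
Lemma comb_of_infinitely_many_comps : forall B,
  ~ finite_family (fun C => is_comp1 E (fun x => ~ B x) C /\ ~ bnd C) -> exists K, comb B K.
Proof.
  intros B Hinf.
  assert (Hfresh : forall l, exists C, (is_comp1 E (fun x => ~ B x) C /\ ~ bnd C) /\ ~ In C l).
  { intro l. apply NNPP; intro H. apply Hinf. exists l. intros C HC.
    apply NNPP; intro; apply H; exists C; auto. }
  destruct (choice _ Hfresh) as [ch Hch].
  set (chosen := fun n => Nat.iter n (fun l => ch l :: l) nil).
  exists (fun n => ch (chosen n)). apply comb_of_components.
  - intro n. apply (Hch (chosen n)).
  - intros n n' Hlt Heq. apply (proj2 (Hch (chosen n'))). rewrite <- Heq.
    apply iter_cons_contains; exact Hlt.
  - intros i Hb. apply (proj2 (proj1 (Hch (chosen (to_nat (i, 0)))))).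
    eapply bounded_sub; [|exact Hb]. intros x Hx; exists (ch (chosen (to_nat (i, 0)))).
    split; [exists 0|]; auto.
Qed.

Lemma far_bounded_component : forall B,
  ~ bnd (union_bounded_comps E (fun x => ~ B x)) -> forall R, exists CR : (G -> Prop) * nat,
    is_comp1 E (fun x => ~ B x) (fst CR) /\ (exists x, fst CR x /\ ~ ball R x) /\
    (forall x, fst CR x -> ball (snd CR) x) /\ R < snd CR.
Proof.
  intros B Hun R.
  destruct (classic (exists y, union_bounded_comps E (fun x => ~ B x) y /\ ~ ball R y))
    as [[y [[C [HC [HCb HCy]]] Hy]]|Hno].
  - apply bounded_iff_in_ball in HCb as [n0 Hn0].
    exists (C, max n0 (S R)); simpl. repeat split; auto; [exists y; auto | | lia].
    intros x Hx. eapply ball_mono; [apply Hn0; auto | lia].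
  - exfalso. apply Hun, bounded_iff_in_ball. exists R.
    intros x Hx. apply NNPP; intro; apply Hno; eauto.
Qed.

(* Condition (1) yields a comb: bounded components escaping to infinity, each
   lying beyond the ball containing the previous one. *)
Lemma comb_of_unbounded_bounded_comps : forall B,
  ~ bnd (union_bounded_comps E (fun x => ~ B x)) -> exists K, comb B K.
Proof.
  intros B Hun. destruct (choice _ (far_bounded_component B Hun)) as [next Hnext].
  set (r := fun n => Nat.iter n (fun R => snd (next R)) 0).
  set (K := fun n => fst (next (r n))).
  assert (Hr_succ : forall n, r n < r (S n)) by (intro n; apply (Hnext (r n))).
  assert (Hr_mono : forall a b, a <= b -> r a <= r b).
  { intros a b H; induction H; auto. pose proof (Hr_succ m); lia. }
  assert (Hr_ge : forall n, n <= r n) by (induction n; [lia | pose proof (Hr_succ n); lia]).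
  assert (Hin : forall n x, K n x -> ball (r (S n)) x) by (intro n; apply (Hnext (r n))).
  assert (Hfar : forall n, exists x, K n x /\ ~ ball (r n) x) by (intro n; apply (Hnext (r n))).
  exists K. apply comb_of_components.
  - intro n. apply (Hnext (r n)).
  - intros n n' Hlt Heq. destruct (Hfar n') as [y [Hy Hny]]. apply Hny.
    rewrite <- Heq in Hy. eapply ball_mono; [apply Hin; exact Hy | apply Hr_mono; lia].
  - intros i Hb. apply bounded_iff_in_ball in Hb as [N HN].
    destruct (Hfar (to_nat (i, N))) as [y [Hy Hny]]. apply Hny.
    eapply ball_mono; [apply HN; exists (K (to_nat (i, N))); split; [exists N|]; auto|].
    pose proof (to_nat_non_decreasing i N). pose proof (Hr_ge (to_nat (i, N))). lia.
Qed.

End LargeScaleGroup.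

Theorem corollary7p10 (G : Type) (mul : G -> G -> G) (inv : G -> G) (e : G)
  (E : G -> G -> Prop)
  (Hgrp : group_laws mul inv e)
  (Hsym : forall x y, E x y -> E y x)
  (Hconn : connected_graph E)
  (Hinv : forall g x y n, dle E (mul g x) (mul g y) n <-> dle E x y n) :
  ~ metrizable_ends E mul <->
  ((exists B, ls_bounded E B /\
      ~ ls_bounded E (union_bounded_comps E (fun x => ~ B x))) \/
   (exists B, ls_bounded E B /\
      ~ finite_family (fun C => is_comp1 E (fun x => ~ B x) C /\ ~ ls_bounded E C))).
Proof.
  split.
  - (* If both conditions fail, they fail in particular for every ball. *)
    intro Hnm. apply NNPP; intro Hneither. apply Hnm.
    apply (metrizable G mul inv e E); auto; intro n; apply NNPP; intro H; apply Hneither;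
      [left | right]; exists (ball G e E n); split; auto; apply ball_bounded; auto.
  - (* Either condition yields a comb, which no metrizable space of ends admits. *)
    intros Hcond [m [Hzero [Hsymm [Htri Htop]]]].
    assert (Hcomb : exists B K, ls_bounded E B /\ comb G E B K).
    { destruct Hcond as [[B [HB H]]|[B [HB H]]].
      - destruct (comb_of_unbounded_bounded_comps G e E Hsym Hconn B H) as [K HK]; eauto.
      - destruct (comb_of_infinitely_many_comps G E Hsym B H) as [K HK]; eauto. }
    destruct Hcomb as [B [K [HB HK]]].
    exact (no_comb G mul e E Hsym Hconn Hinv m Hzero Hsymm Htri Htop B K HB HK).
Qed.
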